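(* Let $O=(W,A,Z,R,RY)$ denote the observed data, with $W$ pre-exposure covariates, $A\in\{0,1\}$ a binary exposure, $Z$ a nonempty set of additional covariates, $R\in\{0,1\}$ a selection indicator, and $Y$ a real outcome observed only when $R=1$; let $(W;Z)$ be an $s$-admissible pair with $Z\neq\emptyset$ and $P$ the observed-data distribution. Let $\pi_A(W)=\Pr(A=1\mid W)$, $\pi_R(W,A,Z)=\Pr(R=1\mid W,A,Z)$, $Q_1(W,A,Z)=\mathbb{E}[Y\mid W,A,Z,R=1]$, $Q_2(W,A)=\mathbb{E}_{Z\mid W,A}Q_1(W,A,Z)$, and let $\psi=\Psi[P]=\mathbb{E}_W[Q_2(W,1)-Q_2(W,0)]$ be the ATE given by the $s$-formula. For putative models $(\tilde Q_1,\tilde Q_2,\tilde\pi_A,\tilde\pi_R)$ define $$\tilde D(O)=\frac{A-\tilde\pi_A(W)}{\tilde\pi_A(W)[1-\tilde\pi_A(W)]}\,\frac{R}{\tilde\pi_R(W,A,Z)}\big[Y-\tilde Q_1(W,A,Z)\big]+\frac{A-\tilde\pi_A(W)}{\tilde\pi_A(W)[1-\tilde\pi_A(W)]}\big[\tilde Q_1(W,A,Z)-\tilde Q_2(W,A)\big]+\tilde Q_2(W,1)-\tilde Q_2(W,0)-\psi,$$ i.e. the EIF of $\Psi$ at $P$ with $(Q_1,Q_2,\pi_A,\pi_R)$ replaced by the putative models while $\psi$ is kept as is. Then $\mathbb{E}_P\tilde D(O)=0$ is a valid (robust) estimating equation for $\psi=\Psi[P]$ (i.e. it holds at the true ATE $\psi$)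 provided at least one of the following holds: (1) the sequential regression models are correctly specified: $\tilde Q_1=Q_1$ and $\tilde Q_2=Q_2$; (2) the exposure and selection propensity score models are correctly specified: $\tilde\pi_A=\pi_A$ and $\tilde\pi_R=\pi_R$; (3) the exposure propensity score model and the mean-imputation model are correctly specified: $\tilde\pi_A=\pi_A$ and $\tilde Q_1=Q_1$.
   Context: An $s$-admissible pair $(W;Z)$ is a pair of covariate sets for which the ATE $\mathbb{E}[Y^{1}-Y^{0}]$ (with $Y^a$ the potential outcome under exposure $a$) is identified from the selected-sample data via the $s$-formula above: $W$ suffices to control confounding of $A$ on $Y$ and $(W,A,Z)$ renders the outcome independent of selection $R$ (so that $Y\perp R\mid W,A,Z$), together with positivity ($0<\pi_A<1$, $\pi_R>0$); the putative propensity models are likewise assumed to satisfy $0<\tilde\pi_A<1$, $\tilde\pi_R>0$. ''Correctly specified'' means the putative model equals the corresponding true nuisance function. The term $RY$ is well defined even when $Y$ is unobserved since it is multiplied by $R$. *)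

From mathcomp Require Import all_boot all_order all_algebra all_classical all_reals all_analysis.
Set Implicit Arguments. Unset Strict Implicit. Unset Printing Implicit Defensive.
Import Order.TTheory GRing.Theory Num.Theory.
Local Open Scope ring_scope.
Local Open Scope ereal_scope.
Local Open Scope ring_scope.
Local Open Scope classical_set_scope.

(* [cond_mean P V X f] : the function f : T -> R is (a version of) the
   conditional expectation E[X | V] under P, i.e. f (on the range of the
   measurable V) is measurable, X is integrable, and for every measurable
   test function g with g(V) X integrable, E[g(V) X] = E[g(V) f(V)]. *)
Definition cond_mean d (Omega : measurableType d) (R : realType)
    (P : probability Omega R) dT (T : measurableType dT)
    (V : Omega -> T) (X : Omega -> R) (f : T -> R) : Prop :=
  [/\ measurable_fun setT f,
  P.-integrable setT (EFin \o X) &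
  forall g : T -> R, measurable_fun setT g ->
    P.-integrable setT (EFin \o (fun w => g (V w) * X w)) ->
    (\int[P]_w (g (V w) * X w)%:E = \int[P]_w (g (V w) * f (V w))%:E)%E].

(* [cond_mean_sel P V S X f] : f is (a version of) E[X | V, S = 1], i.e.
   f is measurable, S X is integrable, and for every measurable test function
   g with 1{S=1} g(V) X integrable, E[1{S=1} g(V) X] = E[1{S=1} g(V) f(V)]. *)
Definition cond_mean_sel d (Omega : measurableType d) (R : realType)
    (P : probability Omega R) dT (T : measurableType dT)
    (V : Omega -> T) (S : Omega -> bool) (X : Omega -> R) (f : T -> R) : Prop :=
  [/\ measurable_fun setT f,
  P.-integrable setT (EFin \o (fun w => (S w : nat)%:R * X w)) &
  forall g : T -> R, measurable_fun setT g ->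
    P.-integrable setT (EFin \o (fun w => (S w : nat)%:R * g (V w) * X w)) ->
    (\int[P]_w ((S w : nat)%:R * g (V w) * X w)%:E
       = \int[P]_w ((S w : nat)%:R * g (V w) * f (V w))%:E)%E].

Definition b2r (R : realType) (b : bool) : R := (b : nat)%:R.

Definition Hcov (R : realType) (TW : Type) (pA : TW -> R) (w : TW) (a : bool) : R :=
  (b2r R a - pA w) / (pA w * (1 - pA w)).

Definition Dtilde (R : realType) (TW TZ : Type)
    (Q1t : TW -> bool -> TZ -> R) (Q2t : TW -> bool -> R)
    (pAt : TW -> R) (pRt : TW -> bool -> TZ -> R) (psi : R)
    (w : TW) (a : bool) (z : TZ) (r : bool) (y : R) : R :=
  Hcov pAt w a * (b2r R r / pRt w a z) * (y - Q1t w a z)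
  + Hcov pAt w a * (Q1t w a z - Q2t w a)
  + Q2t w true - Q2t w false - psi.

From mathcomp Require Import all_boot all_order all_algebra all_classical all_reals all_analysis.
From mathcomp Require Import measurable_realfun ring.
Set Implicit Arguments. Unset Strict Implicit. Unset Printing Implicit Defensive.
Import Order.TTheory GRing.Theory Num.Theory.
Local Open Scope ring_scope.
Local Open Scope classical_set_scope.

(* With H~ = (A - pi~A) / (pi~A (1 - pi~A)), D~ is the sum of
   H~ S/pi~R (Y - Q1)                                  a residual of Y given (W,A,Z) on S = 1,
   H~ S/pi~R (Q1 - Q1~) - H~ (Q1 - Q1~)                0 if Q1~ = Q1, a residual of S if pi~R = piR,
   H~ (Q1 - Q2)                                        a residual of Q1 given (W,A),
   H~ (Q2 - Q2~) - [(Q2 - Q2~)(W,1) - (Q2 - Q2~)(W,0)] 0 if Q2~ = Q2, a residual of A if pi~A = piA,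
   Q2(W,1) - Q2(W,0) - psi                             centred by the s-formula,
   where a residual of X given V is a product g(V) (X - E[X | V]), which has mean zero. Each of the
   three cases makes both conditional terms vanish in mean. The conditional-mean hypotheses only
   give E[g(V) X] = E[g(V) E[X | V]] when g(V) X is integrable; truncating g and letting the
   truncation level grow (dominated convergence) extends this to every g for which the residual
   itself is integrable. *)

Lemma measurable_inv (R : realType) : measurable_fun setT (@GRing.inv R).
Proof.
have -> : @GRing.inv R = fun x => if x == 0 then 0 else x^-1.
  by apply/funext => x; case: eqP => [->|]; rewrite ?invr0.
apply: measurable_fun_if => //; first exact: measurable_fun_eqr.
rewrite setTI.
have -> : (fun x : R => x == 0) @^-1` [set false] = ~` [set 0].
  by apply/seteqP; split => x /=; case: eqP.
apply: open_continuous_measurable_fun.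
  by apply: closed_openC; apply: accessible_closed_set1; exact: hausdorff_accessible.
by move=> x; rewrite inE => /eqP x0; exact: inv_continuous.
Qed.

Lemma measurable_Hcov (R : realType) d (T : measurableType d) (pA : T -> R) :
  measurable_fun setT pA -> measurable_fun setT (fun x : T * bool => Hcov pA x.1 x.2).
Proof.
move=> mpA; have mb : measurable_fun setT (b2r R) by [].
have mpA1 : measurable_fun setT (fun x : T * bool => pA x.1) by apply: measurableT_comp mpA _.
rewrite /Hcov; apply: measurable_funM.
  by apply: measurable_funB => //; apply: measurableT_comp mb _.
apply: measurableT_comp (@measurable_inv R) _.
by apply: measurable_funM => //; exact: measurable_funB.
Qed.

Section integrable_EFin.
Context {d : measure_display} {T : measurableType d} {R : realType}.
Variable mu : {measure set T -> \bar R}.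
Implicit Types f g : T -> R.

Lemma integrableD_EFin f g :
  mu.-integrable setT (EFin \o f) -> mu.-integrable setT (EFin \o g) ->
  mu.-integrable setT (EFin \o (fun x => f x + g x)).
Proof.
move=> fi gi; move: (integrableD measurableT fi gi).
by apply: eq_integrable => // x _; rewrite /= EFinD.
Qed.

Lemma integrableB_EFin f g :
  mu.-integrable setT (EFin \o f) -> mu.-integrable setT (EFin \o g) ->
  mu.-integrable setT (EFin \o (fun x => f x - g x)).
Proof.
move=> fi gi; move: (integrableB measurableT fi gi).
by apply: eq_integrable => // x _; rewrite /= EFinB.
Qed.

End integrable_EFin.

Definition mean_zero {d} {T : measurableType d} {R : realType} (P : probability T R)
    (f : T -> R) : Prop :=
  P.-integrable setT (EFin \o f) /\ (\int[P]_x (f x)%:E = 0)%E.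

Section mean_zero.
Context {d : measure_display} {T : measurableType d} {R : realType}.
Variable P : probability T R.
Implicit Types f g : T -> R.

Lemma eq_mean_zero f g : f =1 g -> mean_zero P f -> mean_zero P g.
Proof.
move=> fg [fi f0]; split; first by move: fi; apply: eq_integrable => // x _; rewrite /= fg.
by rewrite -f0; apply: eq_integral => x _; rewrite fg.
Qed.

Lemma mean_zero0 : mean_zero P (fun _ => 0).
Proof. by split; [exact: integrable0 | exact: integral0]. Qed.

Lemma mean_zeroD f g : mean_zero P f -> mean_zero P g -> mean_zero P (fun x => f x + g x).
Proof.
move=> [fi f0] [gi g0]; split; first exact: integrableD_EFin.
by rewrite -[RHS]adde0 -{1}f0 -g0 -integralD_EFin.
Qed.

Lemma mean_zero_sub_mean f (c : R) :
  P.-integrable setT (EFin \o f) -> (\int[P]_x (f x)%:E = c%:E)%E ->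
  mean_zero P (fun x => f x - c).
Proof.
move=> fi fc; have ci := finite_measure_integrable_cst P c measurableT.
split; first exact: integrableB_EFin.
under eq_integral do rewrite EFinB.
rewrite integralB_EFin // fc -[X in (_ - X)%E]/(\int[P]_x (cst c%:E) x)%E.
rewrite integral_cst // [X in (_ * X)%E](_ : _ = 1%E) ?mule1 ?subee //.
exact: probability_setT.
Qed.

End mean_zero.

Section cond_mean_residual.
Context {d : measure_display} {Omega : measurableType d} {R : realType}.
Context (P : probability Omega R) {dT : measure_display} {T : measurableType dT}.
Variable V : Omega -> T.
Hypothesis mV : measurable_fun setT V.

Section selected.
Variables (S : Omega -> bool) (X : Omega -> R) (f : T -> R).
Hypotheses (mS : measurable_fun setT S) (mX : measurable_fun setT X).
Hypothesis Xf : cond_mean_sel P V S X f.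

Let mf : measurable_fun setT f. Proof. by case: Xf. Qed.

Let mSr : measurable_fun setT (fun w => b2r R (S w)).
Proof. by apply: measurableT_comp mS. Qed.

Let normSr w : `|b2r R (S w)| <= 1.
Proof. by rewrite /b2r; case: (S w); rewrite ?normr1 ?normr0. Qed.

Lemma integrable_sel_bounded (c : T -> R) (C : R) :
  measurable_fun setT c -> (forall t, `|c t| <= C) ->
  P.-integrable setT (EFin \o (fun w => b2r R (S w) * c (V w) * X w)).
Proof.
move=> mc cC; case: Xf => _ iSX _.
apply: (le_integrable measurableT _ _ (integrableZl measurableT C iSX)).
  apply/measurable_EFinP; apply: measurable_funM => //.
  by apply: measurable_funM => //; exact: measurableT_comp.
move=> w _; rewrite /= lee_fin !normrM mulrAC [X in _ <= X]mulrC.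
by apply: ler_wpM2l; rewrite ?mulr_ge0 // (le_trans (cC _)) ?ler_norm.
Qed.

Lemma cond_mean_sel_residual_bounded (c : T -> R) (C C' : R) :
  measurable_fun setT c -> (forall t, `|c t| <= C) -> (forall t, `|c t * f t| <= C') ->
  (\int[P]_w (b2r R (S w) * c (V w) * (X w - f (V w)))%:E = 0)%E.
Proof.
move=> mc cC cfC; case: Xf => _ _ Xf_eq.
have iScX := integrable_sel_bounded mc cC.
have iSf : P.-integrable setT (EFin \o (fun w => b2r R (S w) * c (V w) * f (V w))).
  apply: (le_integrable measurableT _ _ (finite_measure_integrable_cst P C' measurableT)).
    apply/measurable_EFinP; apply: measurable_funM.
      by apply: measurable_funM => //; exact: measurableT_comp.
    exact: measurableT_comp.
  move=> w _; rewrite /= lee_fin -mulrA normrM (ger0_norm (le_trans (normr_ge0 _) (cfC (V w)))).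
  by rewrite -[X in _ <= X]mul1r ler_pM.
under eq_integral do rewrite mulrBr EFinB.
rewrite integralB_EFin // Xf_eq // subee //.
exact: integrable_fin_num.
Qed.

(* Truncate [g] to [{|g| <= n, |f| <= n}] and let [n] grow: dominated convergence applies
   with the integrable dominating function [|S g(V) (X - f(V))|]. *)
Lemma cond_mean_sel_residual (g : T -> R) : measurable_fun setT g ->
  P.-integrable setT (EFin \o (fun w => b2r R (S w) * g (V w) * (X w - f (V w)))) ->
  (\int[P]_w (b2r R (S w) * g (V w) * (X w - f (V w)))%:E = 0)%E.
Proof.
move=> mg ig.
pose c (n : nat) t := if (`|g t| <= n%:R) && (`|f t| <= n%:R) then g t else 0.
have mc n : measurable_fun setT (c n).
  apply: measurable_fun_ifT => //.
  by apply: measurable_and; apply: measurable_fun_ler => //; exact: measurableT_comp.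
have cn0 n : (\int[P]_w (b2r R (S w) * c n (V w) * (X w - f (V w)))%:E = 0)%E.
  apply: (cond_mean_sel_residual_bounded (C := n%:R) (C' := n%:R * n%:R)) => // t; rewrite /c.
    by case: ifP => [/andP[]|_] //; rewrite normr0.
  case: ifP => [/andP[gn fn]|_]; last by rewrite mul0r normr0 mulr_ge0.
  by rewrite normrM ler_pM.
have mres : measurable_fun setT (fun w => X w - f (V w)).
  by apply: measurable_funB => //; exact: measurableT_comp.
have [] := @dominated_convergence _ _ _ P setT measurableT
  (fun n w => (b2r R (S w) * c n (V w) * (X w - f (V w)))%:E)
  (fun w => (b2r R (S w) * g (V w) * (X w - f (V w)))%:E)
  (fun w => (`|b2r R (S w) * g (V w) * (X w - f (V w))|)%:E).
- move=> n; apply/measurable_EFinP; apply: measurable_funM => //.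
  by apply: measurable_funM => //; exact: measurableT_comp.
- exact: measurable_int ig.
- apply: aeW => w _; apply: cvg_near_cst; near=> n.
  by rewrite /c ifT //; apply/andP; split; near: n; exact: nbhs_infty_ger.
- exact: integrable_norm ig.
- apply: aeW => w n _; rewrite lee_fin !normrM ler_wpM2r // ler_wpM2l // /c.
  by case: ifP; rewrite ?normr0.
- move=> _ _ lim_cn.
  have lim0 : [sequence (\int[P]_w (b2r R (S w) * c n (V w) * (X w - f (V w)))%:E)%E]_n
      @ \oo --> (0 : \bar R).
    by apply: cvg_near_cst; apply: nearW => n; exact: cn0.
  exact: (cvg_unique _ lim_cn lim0).
Unshelve. all: end_near.
Qed.

End selected.

Lemma cond_mean_residual (X : Omega -> R) (f : T -> R) : cond_mean P V X f ->
  forall g : T -> R, measurable_fun setT g ->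
  P.-integrable setT (EFin \o (fun w => g (V w) * (X w - f (V w)))) ->
  (\int[P]_w (g (V w) * (X w - f (V w)))%:E = 0)%E.
Proof.
move=> [mf iX Xf_eq] g mg ig.
have mX : measurable_fun setT X by apply/measurable_EFinP; exact: measurable_int iX.
have Xf1 : cond_mean_sel P V (fun _ => true) X f.
  split => // [|c mc ic].
    by move: iX; apply: eq_integrable => // w _; rewrite /= mul1r.
  under eq_integral do rewrite mul1r; under [RHS]eq_integral do rewrite mul1r.
  by apply: Xf_eq => //; move: ic; apply: eq_integrable => // w _; rewrite /= mul1r.
have mT : measurable_fun setT (fun _ : Omega => true) by exact: measurable_cst.
have := cond_mean_sel_residual mT mX Xf1 mg.
under eq_integral do rewrite mul1r.
by apply; move: ig; apply: eq_integrable => // w _; rewrite /= mul1r.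
Qed.

Lemma cond_mean_ipw (S : Omega -> bool) (rho : T -> R) :
  cond_mean P V (fun w => b2r R (S w)) rho -> (forall t, 0 < rho t) ->
  forall g : T -> R, measurable_fun setT g ->
  P.-integrable setT (EFin \o (fun w => g (V w) * (b2r R (S w) / rho (V w)) - g (V w))) ->
  (\int[P]_w (g (V w) * (b2r R (S w) / rho (V w)) - g (V w))%:E = 0)%E.
Proof.
move=> Srho rho_gt0 g mg ig.
have ipw w : g (V w) * (b2r R (S w) / rho (V w)) - g (V w)
    = g (V w) / rho (V w) * (b2r R (S w) - rho (V w)).
  by field; rewrite gt_eqF.
under eq_integral do rewrite ipw.
apply: (cond_mean_residual Srho (g := fun t => g t / rho t)).
  apply: measurable_funM => //; apply: measurableT_comp (@measurable_inv R) _.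
  by case: Srho.
by move: ig; apply: eq_integrable => // w _; rewrite /= ipw.
Qed.

Lemma cond_mean_Hcov (A : Omega -> bool) (pA : T -> R) :
  cond_mean P V (fun w => b2r R (A w)) pA -> (forall t, 0 < pA t < 1) ->
  forall F : T -> bool -> R, measurable_fun setT (fun x : T * bool => F x.1 x.2) ->
  P.-integrable setT (EFin \o (fun w =>
    Hcov pA (V w) (A w) * F (V w) (A w) - (F (V w) true - F (V w) false))) ->
  (\int[P]_w (Hcov pA (V w) (A w) * F (V w) (A w) - (F (V w) true - F (V w) false))%:E = 0)%E.
Proof.
move=> ApA pA01 F mF iF.
have mpA : measurable_fun setT pA by case: ApA.
have balance w : Hcov pA (V w) (A w) * F (V w) (A w) - (F (V w) true - F (V w) false)
    = (F (V w) true / pA (V w) + F (V w) false / (1 - pA (V w))) * (b2r R (A w) - pA (V w)).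
  have /andP[p0 p1] := pA01 (V w).
  have q0 : 1 - pA (V w) != 0 by rewrite subr_eq0 gt_eqF.
  by rewrite /Hcov /b2r; case: (A w); rewrite /=; field; rewrite q0 gt_eqF.
have mFa a : measurable_fun setT (F^~ a).
  rewrite (_ : F^~ a = (fun x : T * bool => F x.1 x.2) \o (fun t => (t, a))) //.
  by apply: measurableT_comp mF _; exact: measurable_fun_pair.
under eq_integral do rewrite balance.
apply: (cond_mean_residual ApA (g := fun t => F t true / pA t + F t false / (1 - pA t))).
  apply: measurable_funD; apply: measurable_funM => //;
    apply: measurableT_comp (@measurable_inv R) _ => //.
  exact: measurable_funB.
by move: iF; apply: eq_integrable => // w _; rewrite /= balance.
Qed.

End cond_mean_residual.

Section robust_estimating_equation.
Context {R : realType} {d : measure_display} {Omega : measurableType d}.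
Context (P : probability Omega R).
Context {dW : measure_display} {TW : measurableType dW}.
Context {dZ : measure_display} {TZ : measurableType dZ}.
Variables (W : Omega -> TW) (A : Omega -> bool) (Z : Omega -> TZ).
Variables (S : Omega -> bool) (Y : Omega -> R).
Hypotheses (mW : measurable_fun setT W) (mA : measurable_fun setT A)
  (mZ : measurable_fun setT Z) (mS : measurable_fun setT S) (mY : measurable_fun setT Y).
Variables (piA : TW -> R) (piR : TW -> bool -> TZ -> R).
Variables (Q1 : TW -> bool -> TZ -> R) (Q2 : TW -> bool -> R).
Hypothesis HpiA : cond_mean P W (fun w => b2r R (A w)) piA.
Hypothesis HpiR : cond_mean P (fun w => (W w, A w, Z w)) (fun w => b2r R (S w))
  (fun x => piR x.1.1 x.1.2 x.2).
Hypothesis HQ1 : cond_mean_sel P (fun w => (W w, A w, Z w)) S Y (fun x => Q1 x.1.1 x.1.2 x.2).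
Hypothesis HQ2 : cond_mean P (fun w => (W w, A w)) (fun w => Q1 (W w) (A w) (Z w))
  (fun x => Q2 x.1 x.2).
Hypotheses (posA : forall w, 0 < piA w < 1) (posR : forall w a z, 0 < piR w a z).
Variables (Q1t : TW -> bool -> TZ -> R) (Q2t : TW -> bool -> R).
Variables (piAt : TW -> R) (piRt : TW -> bool -> TZ -> R).
Hypotheses (mQ1t : measurable_fun setT (fun x : TW * bool * TZ => Q1t x.1.1 x.1.2 x.2))
  (mQ2t : measurable_fun setT (fun x : TW * bool => Q2t x.1 x.2))
  (mpiAt : measurable_fun setT piAt)
  (mpiRt : measurable_fun setT (fun x : TW * bool * TZ => piRt x.1.1 x.1.2 x.2)).
Variable psi : R.
Hypothesis Hpsi : (\int[P]_w (Q2 (W w) true - Q2 (W w) false)%:E = psi%:E)%E.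
Hypothesis HintY : forall h : TW -> bool -> TZ -> R, (h = Q1t \/ h = Q1) ->
  P.-integrable setT (EFin \o (fun w =>
    Hcov piAt (W w) (A w) * (b2r R (S w) / piRt (W w) (A w) (Z w)) * (Y w - h (W w) (A w) (Z w)))).
Hypothesis HintQ : forall h : TW -> bool -> TZ -> R,
  (h = Q1t \/ h = Q1 \/ h = (fun w a _ => Q2t w a) \/ h = (fun w a _ => Q2 w a)) ->
  P.-integrable setT (EFin \o (fun w => Hcov piAt (W w) (A w) * h (W w) (A w) (Z w))).
Hypothesis Hint2 : forall a : bool,
  P.-integrable setT (EFin \o (fun w => Q2t (W w) a)) /\
  P.-integrable setT (EFin \o (fun w => Q2 (W w) a)).

Let mV2 : measurable_fun setT (fun w => (W w, A w)).
Proof. exact: measurable_fun_pair. Qed.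

Let mV3 : measurable_fun setT (fun w => (W w, A w, Z w)).
Proof. by apply: measurable_fun_pair => //; exact: measurable_fun_pair. Qed.

Let mH3 : measurable_fun setT (fun x : TW * bool * TZ => Hcov piAt x.1.1 x.1.2).
Proof. exact: measurableT_comp (measurable_Hcov mpiAt) measurable_fst. Qed.

Let mQ1 : measurable_fun setT (fun x : TW * bool * TZ => Q1 x.1.1 x.1.2 x.2).
Proof. by case: HQ1. Qed.

Let mQ2 : measurable_fun setT (fun x : TW * bool => Q2 x.1 x.2).
Proof. by case: HQ2. Qed.

Let Ht w := Hcov piAt (W w) (A w).

Let outcome_term w :=
  b2r R (S w) * (Ht w / piRt (W w) (A w) (Z w)) * (Y w - Q1 (W w) (A w) (Z w)).

Let selection_term w :=
  Ht w * (Q1 (W w) (A w) (Z w) - Q1t (W w) (A w) (Z w)) * (b2r R (S w) / piRt (W w) (A w) (Z w))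
  - Ht w * (Q1 (W w) (A w) (Z w) - Q1t (W w) (A w) (Z w)).

Let imputation_term w := Ht w * (Q1 (W w) (A w) (Z w) - Q2 (W w) (A w)).

Let exposure_term w := Ht w * (Q2 (W w) (A w) - Q2t (W w) (A w))
  - ((Q2 (W w) true - Q2t (W w) true) - (Q2 (W w) false - Q2t (W w) false)).

Let sformula_term w := Q2 (W w) true - Q2 (W w) false - psi.

Let Dtilde_decomposition w :
  Dtilde Q1t Q2t piAt piRt psi (W w) (A w) (Z w) (S w) (Y w)
  = outcome_term w + (selection_term w + (imputation_term w + (exposure_term w + sformula_term w))).
Proof.
rewrite /Dtilde /outcome_term /selection_term /imputation_term /exposure_term /sformula_term.
by rewrite /Ht; ring.
Qed.

Let outcome_term_mean_zero : mean_zero P outcome_term.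
Proof.
have iY : P.-integrable setT (EFin \o outcome_term).
  move: (HintY (or_intror erefl)); apply: eq_integrable => // w _.
  by rewrite /= /outcome_term /Ht mulrCA.
split => //; apply: (cond_mean_sel_residual mV3 mS mY HQ1
  (g := fun x => Hcov piAt x.1.1 x.1.2 / piRt x.1.1 x.1.2 x.2)) => //.
by apply: measurable_funM => //; exact: measurableT_comp (@measurable_inv R) _.
Qed.

Let selection_term_mean_zero : Q1t = Q1 \/ piRt = piR -> mean_zero P selection_term.
Proof.
case=> [eQ1|epiR].
  apply: (eq_mean_zero _ (mean_zero0 P)) => w.
  by rewrite /selection_term eQ1 subrr mulr0 mul0r subrr.
have iS : P.-integrable setT (EFin \o selection_term).
  have := integrableB_EFin (integrableB_EFin (HintY (or_introl erefl)) (HintY (or_intror erefl)))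
    (integrableB_EFin (HintQ (or_intror (or_introl erefl))) (HintQ (or_introl erefl))).
  by apply: eq_integrable => // w _; rewrite /= /selection_term /Ht; congr EFin; ring.
split => //; rewrite /selection_term epiR.
apply: (cond_mean_ipw mV3 HpiR (fun x => posR x.1.1 x.1.2 x.2)
  (g := fun x => Hcov piAt x.1.1 x.1.2 * (Q1 x.1.1 x.1.2 x.2 - Q1t x.1.1 x.1.2 x.2))).
- by apply: measurable_funM => //; exact: measurable_funB.
- by move: iS; rewrite /selection_term epiR.
Qed.

Let imputation_term_mean_zero : mean_zero P imputation_term.
Proof.
have iI : P.-integrable setT (EFin \o imputation_term).
  have := integrableB_EFin (HintQ (or_intror (or_introl erefl)))
    (HintQ (or_intror (or_intror (or_intror erefl)))).
  by apply: eq_integrable => // w _; rewrite /= /imputation_term /Ht mulrBr.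
split => //; apply: (cond_mean_residual mV2 HQ2 (g := fun x => Hcov piAt x.1 x.2)) => //.
exact: measurable_Hcov.
Qed.

Let exposure_term_mean_zero : Q2t = Q2 \/ piAt = piA -> mean_zero P exposure_term.
Proof.
case=> [eQ2|epiA].
  apply: (eq_mean_zero _ (mean_zero0 P)) => w.
  by rewrite /exposure_term eQ2 !subrr mulr0 subrr.
have iE : P.-integrable setT (EFin \o exposure_term).
  have [iQ2t1 iQ21] := Hint2 true; have [iQ2t0 iQ20] := Hint2 false.
  have := integrableB_EFin
    (integrableB_EFin (HintQ (or_intror (or_intror (or_intror erefl))))
                      (HintQ (or_intror (or_intror (or_introl erefl)))))
    (integrableB_EFin (integrableB_EFin iQ21 iQ2t1) (integrableB_EFin iQ20 iQ2t0)).
  by apply: eq_integrable => // w _; rewrite /= /exposure_term /Ht mulrBr.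
split => //; move: iE; rewrite /exposure_term /Ht epiA => iE.
apply: (cond_mean_Hcov mW HpiA posA (F := fun w a => Q2 w a - Q2t w a)) => //.
exact: measurable_funB.
Qed.

Let sformula_term_mean_zero : mean_zero P sformula_term.
Proof. exact: mean_zero_sub_mean (integrableB_EFin (Hint2 true).2 (Hint2 false).2) Hpsi. Qed.

Lemma Dtilde_mean_zero : Q1t = Q1 \/ piRt = piR -> Q2t = Q2 \/ piAt = piA ->
  mean_zero P (fun w => Dtilde Q1t Q2t piAt piRt psi (W w) (A w) (Z w) (S w) (Y w)).
Proof.
move=> Q1_or_piR Q2_or_piA.
apply: eq_mean_zero (fun w => esym (Dtilde_decomposition w)) _.
apply: mean_zeroD outcome_term_mean_zero _.
apply: mean_zeroD (selection_term_mean_zero Q1_or_piR) _.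
apply: mean_zeroD imputation_term_mean_zero _.
exact: mean_zeroD (exposure_term_mean_zero Q2_or_piA) sformula_term_mean_zero.
Qed.

End robust_estimating_equation.

Theorem mainTheorem2
  (R : realType) (d : measure_display) (Omega : measurableType d)
  (P : probability Omega R)
  (dW : measure_display) (TW : measurableType dW)
  (dZ : measure_display) (TZ : measurableType dZ)
  (* observed data O = (W, A, Z, R, R*Y) *)
  (W : Omega -> TW) (A : Omega -> bool) (Z : Omega -> TZ)
  (S : Omega -> bool) (Y : Omega -> R)
  (mW : measurable_fun setT W) (mA : measurable_fun setT A)
  (mZ : measurable_fun setT Z) (mS : measurable_fun setT S)
  (mY : measurable_fun setT Y)
  (* true nuisance functions *)
  (piA : TW -> R) (piR : TW -> bool -> TZ -> R)
  (Q1 : TW -> bool -> TZ -> R) (Q2 : TW -> bool -> R)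
  (HpiA : cond_mean P W (fun w => b2r R (A w)) piA)
  (HpiR : cond_mean P (fun w => (W w, A w, Z w)) (fun w => b2r R (S w))
            (fun x => piR x.1.1 x.1.2 x.2))
  (HQ1 : cond_mean_sel P (fun w => (W w, A w, Z w)) S Y
            (fun x => Q1 x.1.1 x.1.2 x.2))
  (HQ2 : cond_mean P (fun w => (W w, A w))
            (fun w => Q1 (W w) (A w) (Z w)) (fun x => Q2 x.1 x.2))
  (* positivity *)
  (posA : forall w, 0 < piA w < 1) (posR : forall w a z, 0 < piR w a z)
  (* putative models, with positivity *)
  (Q1t : TW -> bool -> TZ -> R) (Q2t : TW -> bool -> R)
  (piAt : TW -> R) (piRt : TW -> bool -> TZ -> R)
  (mQ1t : measurable_fun setT (fun x : TW * bool * TZ => Q1t x.1.1 x.1.2 x.2))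
  (mQ2t : measurable_fun setT (fun x : TW * bool => Q2t x.1 x.2))
  (mpiAt : measurable_fun setT piAt)
  (mpiRt : measurable_fun setT (fun x : TW * bool * TZ => piRt x.1.1 x.1.2 x.2))
  (posAt : forall w, 0 < piAt w < 1) (posRt : forall w a z, 0 < piRt w a z)
  (* the target functional psi = Psi[P] given by the s-formula *)
  (psi : R)
  (Hpsi : (\int[P]_w (Q2 (W w) true - Q2 (W w) false)%:E = psi%:E)%E)
  (* integrability (regularity) of the terms entering D~ *)
  (HintY : forall h : TW -> bool -> TZ -> R, (h = Q1t \/ h = Q1) ->
       P.-integrable setT (EFin \o (fun w =>
          Hcov piAt (W w) (A w) * (b2r R (S w) / piRt (W w) (A w) (Z w))
            * (Y w - h (W w) (A w) (Z w)))))
  (HintQ : forall h : TW -> bool -> TZ -> R,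
     (h = Q1t \/ h = Q1 \/ h = (fun w a _ => Q2t w a) \/ h = (fun w a _ => Q2 w a)) ->
       P.-integrable setT (EFin \o (fun w =>
          Hcov piAt (W w) (A w) * h (W w) (A w) (Z w))))
  (Hint2 : forall a : bool,
     P.-integrable setT (EFin \o (fun w => Q2t (W w) a)) /\
     P.-integrable setT (EFin \o (fun w => Q2 (W w) a))) :
  [\/ Q1t = Q1 /\ Q2t = Q2,
      piAt = piA /\ piRt = piR
    | piAt = piA /\ Q1t = Q1] ->
  (\int[P]_w (Dtilde Q1t Q2t piAt piRt psi
                 (W w) (A w) (Z w) (S w) (Y w))%:E = 0)%E.
Proof.
move=> cases.
have [Q1_or_piR Q2_or_piA] : (Q1t = Q1 \/ piRt = piR) /\ (Q2t = Q2 \/ piAt = piA).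
  by case: cases => -[e1 e2]; split; by [left | right].
exact: (Dtilde_mean_zero mW mA mZ mS mY HpiA HpiR HQ1 HQ2 posA posR mQ1t mQ2t mpiAt mpiRt
  Hpsi HintY HintQ Hint2 Q1_or_piR Q2_or_piA).2.
Qed.
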